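(* Let $\mathcal{G}=(V,L)$ be a finite connected undirected graph with monitor set $M$ and non-monitor set $N=V\setminus M$, $\sigma=|N|$, with measurement paths given by Controllable Simple-path Probing (CSP). For $v\in N$ let $\pi_v:=\min\big(\min_{m\in M}|C_{\mathcal{G}_m}(v,m')|,\ |C_{\mathcal{G}^*}(v,m')|-1\big)$. For $1\le k\le\sigma-1$ let $S^{\mathrm{outer}}(k):=\{v\in N:\pi_v\ge k\}$ and $S^{\mathrm{inner}}(k):=\{v\in N:\pi_v\ge k+1\}$, and let $S^*_{\mathrm{CSP}}(k)$ be the maximum-cardinality $k$-identifiable subset of $N$. Then $S^{\mathrm{inner}}(k)\subseteq S^*_{\mathrm{CSP}}(k)\subseteq S^{\mathrm{outer}}(k)$.
   Context: Under CSP, the measurement paths $P$ are all simple paths (no repeated nodes) in $\mathcal{G}$ between two distinct monitors. A failure set is any $F\subseteq N$; a path fails iff it traverses a node of $F$. $P_F$ is the set of paths in $P$ traversing a node of $F$; $F_1,F_2$ distinguishable iff $P_{F_1}\ne P_{F_2}$. $S\subseteq N$ is $k$-identifiable if any two failure sets $F_1,F_2$ with $|F_1|,|F_2|\le k$ and $F_1\cap S\ne F_2\cap S$ are distinguishable; the maximum-cardinality $k$-identifiable subset of $N$ is unique. For $M'\subseteq M$, $\mathcal{N}(M')$ is the set of non-monitors adjacent to a monitor in $M'$. $\mathcal{G}^*$: delete all monitors from $\mathcal{G}$, add a virtual node $m'$, link $m'$ to every node of $\mathcal{N}(M)$. For $m\in M$, $\mathcal{G}_m$: delete all monitors, add a virtual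 node $m'$, link $m'$ to every node of $\mathcal{N}(M\setminus\{m\})$. For nodes $s,t$ of a graph $\mathcal{H}$, $C_{\mathcal{H}}(s,t)$ is a minimum-cardinality set of nodes (other than $s,t$) whose deletion destroys all $s$–$t$ paths; if $s,t$ are adjacent, $C_{\mathcal{H}}(s,t):=V(\mathcal{H})\setminus\{t\}$. *)

From mathcomp Require Import all_boot.
Set Implicit Arguments. Unset Strict Implicit. Unset Printing Implicit Defensive.

Section Defs.
Variable T : finType.
Variable e : rel T.          (* adjacency relation of G (symmetric, irreflexive) *)
Variable M : {set T}.        (* monitors; non-monitors are N = ~: M *)

(** Measurement paths under CSP: simple paths of G (as node sequences)
    between two distinct monitors. *)
Definition is_meas_path (p : seq T) : bool :=
  if p is x :: q then
    [&& path e x q, uniq p, x \in M, last x q \in M & x != last x q]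
  else false.

Definition PF (F : {set T}) : pred (seq T) :=
  [pred p | is_meas_path p && has (fun x => x \in F) p].

Definition distinguishable (F1 F2 : {set T}) : Prop := ~ (PF F1 =i PF F2).

Definition k_identifiable (k : nat) (S : {set T}) : Prop :=
  forall F1 F2 : {set T}, F1 \subset ~: M -> F2 \subset ~: M ->
    #|F1| <= k -> #|F2| <= k -> F1 :&: S != F2 :&: S ->
    distinguishable F1 F2.

Definition max_k_identifiable (k : nat) (S : {set T}) : Prop :=
  [/\ S \subset ~: M, k_identifiable k S &
      forall S' : {set T}, S' \subset ~: M -> k_identifiable k S' -> #|S'| <= #|S| ].

Definition nbrs (A : {set T}) : {set T} :=
  [set y | (y \notin M) && [exists m in A, e m y]].

(** Auxiliary graph (vertex set, edges) on option T, where None is the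
    virtual node m': monitors deleted, m' linked to every node of N(A).
    G* uses A = M, G_m uses A = M :\ m. *)
Definition aux_V : {set option T} := None |: [set Some x | x in ~: M].

Definition aux_e (A : {set T}) : rel (option T) := fun a b =>
  match a, b with
  | Some x, Some y => [&& x \notin M, y \notin M & e x y]
  | None, Some y | Some y, None => y \in nbrs A
  | None, None => false
  end.
End Defs.

Section Cut.
Variable U : finType.
Variables (VH : {set U}) (eH : rel U).

Definition separates (s t : U) (C : {set U}) : bool :=
  (C \subset VH :\: [set s; t]) &&
  ~~ connect (fun x y => [&& eH x y, x \in VH :\: C & y \in VH :\: C]) s t.

(* if s,t adjacent, C_H(s,t) := V(H) \ {t}, of size |V(H)| - 1 (t in V(H));
   otherwise the minimum size of a separating set (the default #|VH| of the
   min is never reached since VH :\: [set s; t] separates). *)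
Definition cut_size (s t : U) : nat :=
  if eH s t then #|VH :\ t|
  else \big[minn/#|VH|]_(C : {set U} | separates s t C) #|C|.
End Cut.

Definition pi_v (T : finType) (e : rel T) (M : {set T}) (v : T) : nat :=
  \big[minn/(cut_size (aux_V M) (aux_e e M M) (Some v) None - 1)]_(m in M)
     cut_size (aux_V M) (aux_e e M (M :\ m)) (Some v) None.

From mathcomp Require Import all_boot zify.
Set Implicit Arguments. Unset Strict Implicit. Unset Printing Implicit Defensive.

(* If pi_v >= k+1 and F is a set of at most k non-monitors avoiding v, the cut
   bounds in G^* and the G_m show that in G - F the vertex v still reaches the
   monitors after deleting any single vertex; a Menger-type argument then gives
   two paths from v to distinct monitors sharing only v, i.e. a measurement
   path through v that F does not touch.  Such a v is therefore distinguished
   from every small failure set not containing it, so adding these vertices to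
   a k-identifiable set keeps it k-identifiable, and maximality puts them in
   S*.  Conversely, if pi_v < k there is a small vertex cut C separating v from
   the monitors in G^*, or from all monitors but one in some G_m; every
   measurement path through v has two disjoint arms reaching distinct
   monitors, so it crosses C (minus one vertex, in the G^* case).  Hence, with F
   that set, the failure sets F and F + {v} are indistinguishable, and v lies in
   no k-identifiable set. *)

(* Linear arithmetic over multiplicities: every [count _ _] and every boolean
   cast [nat_of_bool b] (bounded by 1) in the goal is abstracted, the context is
   cleared and [lia] is called, so the relevant facts must first be pushed into
   the goal.  Uniqueness goals reach it through [uniq_countP]. *)
Ltac count_lia :=
  rewrite ?[nat_of_bool true]/1 ?[nat_of_bool false]/0;
  repeat match goal with |- context [nat_of_bool ?b] =>
    lazymatch b with true => fail | false => fail | _ =>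
    let c := fresh "b" in move: (leq_b1 b); move: (nat_of_bool b) => c end end;
  repeat match goal with |- context [count ?a ?s] =>
    let c := fresh "c" in move: (count a s) => c end;
  repeat match goal with H : ?P |- _ => match type of P with Prop => clear H end end;
  lia.

Section SeqFacts.
Variable T : eqType.
Implicit Types (s : seq T) (x y : T).

Lemma count_mem_gt0 y s : y \in s -> 0 < count_mem y s.
Proof. by move=> ys; rewrite -has_count has_pred1. Qed.

Lemma uniq_countP s : uniq s <-> forall y, count_mem y s <= 1.
Proof.
split; first by move=> u y; rewrite count_uniq_mem //; case: (_ \in _).
move=> H; apply: count_mem_uniq => y; have := H y.
case: (boolP (y \in s)) => [ys|/count_memPn -> //].
have := count_mem_gt0 ys; lia.
Qed.

Lemma count_mem_disjoint s1 s2 y : all (fun z => z \notin s1) s2 ->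
  count_mem y s2 = 0 \/ count_mem y s1 = 0.
Proof.
move=> H; case: (boolP (y \in s2)) => ys2; last by left; apply/count_memPn.
by right; apply/count_memPn; exact: (allP H y ys2).
Qed.

Lemma count_mem_notin x s y : x \notin s ->
  count_mem y s = 0 \/ nat_of_bool (x == y) = 0.
Proof. by case: (eqVneq x y) => [<- /count_memPn|]; [left | right]. Qed.

Lemma count_mem_neq x1 x2 y : x1 != x2 ->
  nat_of_bool (x1 == y) = 0 \/ nat_of_bool (x2 == y) = 0.
Proof. by case: (eqVneq x1 y) => [<-|]; [rewrite eq_sym => /negbTE ->; right | left]. Qed.

Lemma has_split_first (P : pred T) s : has P s ->
  exists s1 x s2, [/\ s = s1 ++ x :: s2, P x & all (predC P) s1].
Proof.
elim: s => //= y s IH; case Py: (P y) => /= H; first by exists [::], y, s.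
have [s1 [x [s2 [-> Px Hs1]]]] := IH H.
by exists (y :: s1), x, s2; rewrite /= Py.
Qed.

Lemma has_split_last (P : pred T) s : has P s ->
  exists s1 x s2, [/\ s = s1 ++ x :: s2, P x & all (predC P) s2].
Proof.
elim: s => //= y s IH; case Hs: (has P s).
  by move=> _; have [s1 [x [s2 [-> Px Hs2]]]] := IH Hs; exists (y :: s1), x, s2.
by rewrite orbF => Py; exists [::], y, s; rewrite all_predC Hs.
Qed.

Lemma path_split_suffix (r : rel T) x s s1 y s2 : x :: s = s1 ++ y :: s2 ->
  path r x s -> path r y s2 /\ last x s = last y s2.
Proof.
case: s1 => [|z s1] /= [-> ->] //.
by rewrite cat_path last_cat /= => /andP[_ /andP[_ ->]].
Qed.

Lemma has_mem_last (A : pred T) x s : last x s \in A -> x \notin A -> has (mem A) s.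
Proof.
move=> lA xA; apply/hasP; exists (last x s) => //.
by move: (mem_last x s); rewrite inE => /orP[/eqP E|//]; rewrite -E lA in xA.
Qed.

End SeqFacts.

Section TwoPaths.
Variables (T : finType) (r : rel T).

Definition avoid (c : T) : rel T := fun x y => [&& r x y, x != c & y != c].

Definition fan (v : T) (X : {set T}) := exists A B,
  [/\ path r v A, path r v B, uniq (v :: A ++ B), last v A \in X & last v B \in X].

Definition reach_avoiding (v : T) (X : {set T}) :=
  forall c, c != v -> exists2 x, x \in X & connect (avoid c) v x.

Lemma path_avoid c x p : path (avoid c) x p -> path r x p && (c \notin p).
Proof.
elim: p x => //= y p IH x /andP[/and3P[rxy _ yc] /IH /andP[py cp]].
by rewrite inE eq_sym (negbTE yc) rxy py cp.
Qed.

Lemma connect_uniq_path (r' : rel T) x y : connect r' x y ->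
  exists p, [/\ path r' x p, last x p = y & uniq (x :: p)].
Proof.
by case/connectP => p pp ->; case: (shortenP pp) => p' pp' up' _; exists p'.
Qed.

(* Two paths [v A0 x] and [v B0 x] closing a cycle through [x \in X] are
   rerouted along a path to [X] that avoids [x]: it leaves the cycle for good at
   some vertex [u], and its tail after [u] replaces the arc of the cycle beyond
   [u]. *)
Lemma fan_of_cycle v (X : {set T}) A0 B0 x : x \in X -> v \notin X ->
  path r v (rcons A0 x) -> path r v (rcons B0 x) -> uniq (v :: x :: A0 ++ B0) ->
  reach_avoiding v X -> fan v X.
Proof.
move=> xX vX pA pB U HX.
have xv : x != v by apply: contraNneq vX => <-.
have [y yX /connect_uniq_path[R [pR lR uR]]] := HX x xv.
case/andP: (path_avoid pR) => {}pR xR.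
have hC : has (mem (v :: A0 ++ B0)) (v :: R) by rewrite /= mem_head.
have [s1 [u [s2 [E uC s2C]]]] := has_split_last hC.
have [ps2 ls2] := path_split_suffix E pR; rewrite lR in ls2.
have U2 := uR; rewrite E in U2.
have xs2 : x \notin s2.
  apply: contra xR => xs2; have : x \in v :: R by rewrite E mem_cat inE xs2 !orbT.
  by rewrite inE (negbTE xv).
have s2C' : all (fun z => z \notin v :: A0 ++ B0) s2 by [].
move: uC; rewrite /= inE mem_cat => /orP[/eqP uv | /orP[uA|uB]].
- subst u; exists s2, (rcons A0 x); split; rewrite ?last_rcons -?ls2 //.
  apply/uniq_countP => z; have := (uniq_countP _).1 U z.
  have := (uniq_countP _).1 U2 z.
  have := count_mem_disjoint z s2C'; have := count_mem_notin z xs2.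
  rewrite /= !count_cat -!cats1 !count_cat /=; count_lia.
- move: pA U s2C'; case/splitPr: uA => A1 A2 pA U s2C'.
  exists (A1 ++ u :: s2), (rcons B0 x); split => //;
    [| |by rewrite last_cat /= -ls2 | by rewrite last_rcons].
    by move: pA; rewrite rcons_cat !cat_path /= => /andP[-> /andP[-> _]].
  apply/uniq_countP => z; have := (uniq_countP _).1 U z.
  have := (uniq_countP _).1 U2 z.
  have := count_mem_disjoint z s2C'; have := count_mem_notin z xs2.
  rewrite /= !count_cat /= -!cats1 !count_cat /=; count_lia.
- move: pB U s2C'; case/splitPr: uB => B1 B2 pB U s2C'.
  exists (rcons A0 x), (B1 ++ u :: s2); split => //;
    [| |by rewrite last_rcons | by rewrite last_cat /= -ls2].
    by move: pB; rewrite rcons_cat !cat_path /= => /andP[-> /andP[-> _]].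
  apply/uniq_countP => z; have := (uniq_countP _).1 U z.
  have := (uniq_countP _).1 U2 z.
  have := count_mem_disjoint z s2C'; have := count_mem_notin z xs2.
  rewrite /= !count_cat /= -!cats1 !count_cat /=; count_lia.
Qed.

Lemma path_crossing_edge (X : {set T}) x p : path r x p -> last x p \in X ->
  x \notin X -> exists w z, [/\ w \notin X, z \in X & r w z].
Proof.
elim: p x => [|y p IH] x /=; first by move=> _ ->.
move=> /andP[rxy py] ly xX; case yX: (y \in X); first by exists x, y.
by apply: (IH y py ly); rewrite yX.
Qed.

Lemma fan_of_source_edge v (X : {set T}) z : v \notin X -> z \in X -> r v z ->
  reach_avoiding v X -> fan v X.
Proof.
move=> vX zX rvz HX; have zv : z != v by apply: contraNneq vX => <-.
have [y yX /connect_uniq_path[Q [pQ lQ uQ]]] := HX z zv.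
case/andP: (path_avoid pQ) => pQ' zQ.
exists [:: z], Q; split; rewrite /= ?lQ ?rvz //.
by move: uQ => /= /andP[vQ ->]; rewrite inE negb_or eq_sym zv vQ zQ.
Qed.

(* A fan ending at the crossing edge [w z] either extends by [z], or, when the
   other path already ends at [z], closes a cycle. *)
Lemma fan_of_crossing_edge v (X : {set T}) w z A0 a B0 : a \in X -> w \notin X ->
  v \notin X -> z \in X -> r w z -> path r v (rcons A0 a) -> path r v (rcons B0 w) ->
  uniq (v :: rcons A0 a ++ rcons B0 w) -> all (fun y => y \notin X) A0 ->
  all (fun y => y \notin X) B0 -> reach_avoiding v X -> fan v X.
Proof.
move=> aX wX vX zX rwz pA pB U HA HB HX.
have pBz : path r v (rcons (rcons B0 w) z) by rewrite rcons_path pB last_rcons.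
case: (eqVneq z a) => [za|za].
  subst z; apply: (fan_of_cycle (B0 := rcons B0 w) aX vX pA pBz _ HX).
  apply/uniq_countP => y; have := (uniq_countP _).1 U y.
  rewrite /= !count_cat -!cats1 /= !count_cat /=; count_lia.
exists (rcons A0 a), (rcons (rcons B0 w) z); split; rewrite ?last_rcons //.
have zA0 : z \notin A0 by apply/negP => /(allP HA); rewrite zX.
have zB0 : z \notin B0 by apply/negP => /(allP HB); rewrite zX.
have zv : z != v by apply: contraNneq vX => <-.
have zw : z != w by apply: contraNneq wX => <-.
apply/uniq_countP => y; have := (uniq_countP _).1 U y.
have := count_mem_notin y zA0; have := count_mem_notin y zB0.
have := count_mem_neq y zv; have := count_mem_neq y za; have := count_mem_neq y zw.
rewrite /= !count_cat -!cats1 /= !count_cat /=; count_lia.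
Qed.

Lemma fan_of_fan_setU1 v (X : {set T}) w z : w \notin X -> z \in X -> r w z ->
  v \notin X -> w != v -> fan v (w |: X) -> reach_avoiding v X -> fan v X.
Proof.
move=> wX zX rwz vX wv [A [B [pA pB U lA lB]]] HX.
have vX' : v \notin w |: X by rewrite !inE negb_or vX eq_sym wv.
have [A0 [a [A1 [EA aX' HA]]]] := has_split_first (has_mem_last lA vX').
have [B0 [b [B1 [EB bX' HB]]]] := has_split_first (has_mem_last lB vX').
have pA' : path r v (rcons A0 a).
  by move: pA; rewrite EA cat_path /= rcons_path => /andP[-> /andP[-> _]].
have pB' : path r v (rcons B0 b).
  by move: pB; rewrite EB cat_path /= rcons_path => /andP[-> /andP[-> _]].
have U' : uniq (v :: rcons A0 a ++ rcons B0 b).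
  apply/uniq_countP => y; have := (uniq_countP _).1 U y; rewrite EA EB.
  rewrite /= !count_cat -!cats1 /= !count_cat /=; count_lia.
have notX (s : seq T) : all (predC (mem (w |: X))) s -> all (fun y => y \notin X) s.
  by apply: sub_all => t; rewrite /= inE negb_or => /andP[_ ->].
have inX t : t \in w |: X -> t != w -> t \in X.
  by rewrite !inE => /orP[/eqP ->|//]; rewrite eqxx.
case: (eqVneq a w) => [aw|aw]; case: (eqVneq b w) => [bw|bw].
- subst a b; exfalso; have := (uniq_countP _).1 U' w.
  rewrite /= !count_cat -!cats1 /= !count_cat /= eqxx; count_lia.
- subst a; apply: (fan_of_crossing_edge (inX _ bX' bw) wX vX zX rwz pB' pA' _
    (notX _ HB) (notX _ HA) HX).
  apply/uniq_countP => y; have := (uniq_countP _).1 U' y.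
  rewrite /= !count_cat -!cats1 /= !count_cat /=; count_lia.
- subst b; exact: (fan_of_crossing_edge (inX _ aX' aw) wX vX zX rwz pA' pB' U'
    (notX _ HA) (notX _ HB) HX).
- by exists (rcons A0 a), (rcons B0 b); rewrite !last_rcons inX // inX.
Qed.

(* Menger's theorem for two paths from a vertex to a set, by induction on the
   number of vertices outside [X]: a path from [v] into [X] has a last edge
   [w z] entering [X], and a fan into [w |: X] is turned into one into [X]. *)
Lemma fan_of_reach_avoiding v (X : {set T}) :
  v \notin X -> (exists2 x, x \in X & connect r v x) -> reach_avoiding v X -> fan v X.
Proof.
move: {2}#|~: X| (leqnn #|~: X|) => n; elim: n v X => [|n IH] v X hn vX [x xX cx] HX.
  have : 0 < #|~: X| by apply/card_gt0P; exists v; rewrite inE.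
  lia.
case/connectP: cx => p pp lp; rewrite lp in xX.
have [w [z [wX zX rwz]]] := path_crossing_edge pp xX vX.
case: (eqVneq w v) => [wv|wv]; first by subst w; exact: fan_of_source_edge zX rwz HX.
apply: (fan_of_fan_setU1 wX zX rwz vX wv _ HX); apply: IH.
- have -> : ~: (w |: X) = ~: X :\ w by apply/setP => t; rewrite !inE negb_or andbC.
  by have := cardsD1 w (~: X); rewrite inE wX /=; lia.
- by rewrite !inE negb_or vX andbT eq_sym.
- by exists (last v p); [rewrite inE xX orbT | apply/connectP; exists p].
- by move=> c cv; have [y yX cy] := HX c cv; exists y; rewrite // inE yX orbT.
Qed.

End TwoPaths.

Section BigMin.
Variables (I : finType) (P : pred I) (F : I -> nat) (d : nat).

Lemma geq_bigmin_cond i : P i -> \big[minn/d]_(j | P j) F j <= F i.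
Proof.
move=> Pi; have : i \in index_enum I by rewrite mem_index_enum.
elim: (index_enum I) => // a s IH; rewrite inE big_cons => /orP[/eqP <-|/IH le].
  by rewrite Pi geq_minl.
by case: ifP => // _; rewrite geq_min le orbT.
Qed.

Lemma geq_bigmin_idx : \big[minn/d]_(j | P j) F j <= d.
Proof. by elim/big_rec: _ => // j x _ h; rewrite geq_min h orbT. Qed.

Lemma bigmin_leq_wit n : \big[minn/d]_(j | P j) F j <= n ->
  d <= n \/ exists2 i, P i & F i <= n.
Proof.
apply: (big_ind (fun x => x <= n -> _)); first by left.
  by move=> x y Kx Ky; rewrite geq_min => /orP[/Kx|/Ky].
by move=> i Pi h; right; exists i.
Qed.

End BigMin.

Section AuxGraph.
Variables (T : finType) (e : rel T) (M : {set T}).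
Hypothesis e_sym : symmetric e.

Local Notation VH := (aux_V M).

(* [aux_del A C] is the auxiliary graph on [option T] (with [None] the virtual
   node [m'] linked to [nbrs M A]) minus [C]; [mon_rel A C] is its trace in G:
   its walks go through non-monitors outside [C] and may end in a monitor of
   [A]. *)
Definition aux_del (A C : {set T}) : rel (option T) := fun x y =>
  [&& aux_e e M A x y, x \in VH :\: (Some @: C) & y \in VH :\: (Some @: C)].

Definition mon_rel (A C : {set T}) : rel T := fun x y =>
  [&& e x y, x \notin M, x \notin C, y \notin C & (y \notin M) || (y \in A)].

Lemma mem_imset_Some x (C : {set T}) : (Some x \in Some @: C) = (x \in C).
Proof. by rewrite mem_imset //; exact: Some_inj. Qed.

Lemma None_imset_Some (C : {set T}) : (None \in Some @: C) = false.
Proof. by apply/imsetP => -[x _]. Qed.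

Lemma Some_aux_V x : (Some x \in VH) = (x \notin M).
Proof. by rewrite /aux_V !inE /= mem_imset_Some inE. Qed.

Lemma None_aux_V : None \in VH.
Proof. by rewrite /aux_V !inE. Qed.

Lemma card_aux_V : #|VH| = #|~: M|.+1.
Proof.
rewrite (cardsD1 None) None_aux_V add1n; congr _.+1.
have -> : VH :\ None = Some @: ~: M.
  by apply/setP => -[x|]; rewrite !inE ?mem_imset_Some ?None_imset_Some ?Some_aux_V ?inE.
by rewrite card_imset //; exact: Some_inj.
Qed.

Lemma card_aux_V1 : #|VH :\ None| = #|~: M|.
Proof. by have := cardsD1 None VH; rewrite None_aux_V card_aux_V add1n => -[]. Qed.

Lemma connect_aux_del_monitor (A C : {set T}) v : A \subset M -> C \subset ~: M ->
  connect (aux_del A C) (Some v) None -> exists2 m, m \in A & connect (mon_rel A C) v m.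
Proof.
move=> AM CM /connectP[p]; move: (connect0 (mon_rel A C) v).
elim: p {2 3 4}v => [|[y|] p IH] x //= c0x /andP[/and3P[hxy hx hy] pp] lp.
  apply: (IH y _ pp lp); apply: connect_trans c0x (connect1 _).
  move: hxy hx hy; rewrite /aux_e !in_setD !mem_imset_Some !Some_aux_V.
  by case/and3P=> xM yM exy /andP[xC _] /andP[yC _]; rewrite /mon_rel exy xM xC yC yM.
move: hxy hx; rewrite /aux_e /nbrs !inE !mem_imset_Some.
move=> /andP[xM /existsP[m /andP[mA emx]]] /andP[xC _].
exists m => //; apply: connect_trans c0x (connect1 _).
have mM : m \in M := subsetP AM m mA.
have mC : m \notin C by apply: contraL mM => /(subsetP CM); rewrite inE.
by rewrite /mon_rel e_sym emx xM xC mC mA orbT.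
Qed.


Lemma cut_size_le (A C : {set T}) v : A \subset M -> C \subset ~: M -> v \notin M ->
  v \notin C -> ~~ [exists m in A, connect (mon_rel A C) v m] ->
  cut_size VH (aux_e e M A) (Some v) None <= #|C|.
Proof.
move=> AM CM vM vC noreach; rewrite /cut_size; case: ifP => adj.
  move: adj; rewrite /aux_e /nbrs inE => /andP[_ /existsP[m /andP[mA emv]]].
  case/negP: noreach; apply/exists_inP; exists m => //; apply: connect1.
  have mM : m \in M := subsetP AM m mA.
  have mC : m \notin C by apply: contraL mM => /(subsetP CM); rewrite inE.
  by rewrite /mon_rel e_sym emv vM vC mC mA orbT.
have sep : separates VH (aux_e e M A) (Some v) None (Some @: C).
  apply/andP; split; last first.
    apply/negP => /(connect_aux_del_monitor AM CM) reach.
    by case/negP: noreach; apply/exists_inP.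
  apply/subsetP => _ /imsetP[c cC ->]; rewrite !inE /= mem_imset_Some inE.
  have cM : c \notin M by have := subsetP CM c cC; rewrite inE.
  by rewrite cM andbT; apply/norP; split => //; apply: contraNneq vC => -[<-].
apply: leq_trans (geq_bigmin_cond (fun C : {set option T} => #|C|) #|VH| sep) _.
by rewrite card_imset //; exact: Some_inj.
Qed.

Lemma connect_monitor_of_cut_size (A C : {set T}) v : A \subset M -> C \subset ~: M ->
  v \notin M -> v \notin C -> #|C| < cut_size VH (aux_e e M A) (Some v) None ->
  exists2 m, m \in A & connect (mon_rel A C) v m.
Proof.
move=> AM CM vM vC hC; apply/exists_inP; apply: contraTT hC => noreach.
by rewrite -leqNgt; exact: cut_size_le.
Qed.

Lemma small_cut_separator (A : {set T}) v j : v \notin M ->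
  cut_size VH (aux_e e M A) (Some v) None <= j -> j < #|~: M| ->
  exists C : {set T}, [/\ C \subset ~: M, v \notin C, #|C| <= j &
    ~~ connect (aux_del A C) (Some v) None].
Proof.
move=> vM hj hjN; move: hj; rewrite /cut_size; case: ifP => adj hj.
  by rewrite card_aux_V1 in hj; exfalso; lia.
case/bigmin_leq_wit: hj => [hj|[C0 /andP[sub nc] hC0]].
  by rewrite card_aux_V in hj; exfalso; lia.
set C := [set x | Some x \in C0].
have E : C0 = Some @: C.
  apply/setP => -[x|]; first by rewrite mem_imset_Some inE.
  by rewrite None_imset_Some; apply/negP => /(subsetP sub); rewrite !inE eqxx orbT.
exists C; split.
- apply/subsetP => x; rewrite !inE => /(subsetP sub).
  by rewrite in_setD Some_aux_V => /andP[_ ->].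
- by rewrite inE; apply/negP => /(subsetP sub); rewrite !inE eqxx.
- by move: hC0; rewrite E card_imset //; exact: Some_inj.
- by rewrite E in nc.
Qed.

Lemma path_rev_rcons x s y : path e x (rcons s y) -> path e y (rcons (rev s) x).
Proof.
have := rev_path e x (rcons s y); rewrite last_rcons belast_rcons rev_cons => ->.
by rewrite (@eq_path _ (fun a b => e b a) e (fun a b => e_sym b a)).
Qed.

Definition del_rel (F : {set T}) : rel T := fun x y => [&& e x y, x \notin F & y \notin F].

Lemma path_del_rel (F : {set T}) x p : path (del_rel F) x p -> all (fun y => y \notin F) p.
Proof. by elim: p x => //= y p IH x /andP[/and3P[_ _ ->] /IH]. Qed.

Lemma connect_del_rel_avoid (F : {set T}) c x y : c \in F -> connect (del_rel F) x y ->
  connect (avoid (del_rel F) c) x y.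
Proof.
move=> cF; apply: connect_sub => a b h; apply: connect1; move: (h) => /and3P[_ aF bF].
rewrite /avoid h /=.
by apply/andP; split; [apply: contraNneq aF => -> | apply: contraNneq bF => ->].
Qed.

Definition meas_robust (k : nat) (v : T) := forall F : {set T},
  F \subset ~: M -> #|F| <= k -> v \notin F ->
  exists p, [/\ is_meas_path e M p, v \in p & ~~ has (fun x => x \in F) p].

Lemma cut_sizes_of_pi_v n v : n.+1 <= pi_v e M v ->
  n.+2 <= cut_size VH (aux_e e M M) (Some v) None /\
  forall m, m \in M -> n.+1 <= cut_size VH (aux_e e M (M :\ m)) (Some v) None.
Proof.
rewrite /pi_v => hpi; split.
  by have := leq_trans hpi (geq_bigmin_idx _ _ _); lia.
by move=> m mM; exact: leq_trans hpi (geq_bigmin_cond _ _ mM).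
Qed.

(* A failure set [F] of size at most [k] is too small to cut [v] from the monitors in
   [G^*] even after one more deletion, and too small to cut [v] from [M :\ m] in
   [G_m]: so in [G - F] the vertex [v] reaches [M] avoiding any single vertex. *)
Lemma reach_avoiding_of_pi_v k v (F : {set T}) : v \notin M -> k.+1 <= pi_v e M v ->
  F \subset ~: M -> v \notin F -> #|F| <= k ->
  (exists2 x, x \in M & connect (del_rel F) v x) /\ reach_avoiding (del_rel F) v M.
Proof.
move=> vM /cut_sizes_of_pi_v[hs hm] FM vF hF.
have mon_del (C : {set T}) : C \subset ~: M -> v \notin C -> #|C| <= k.+1 ->
    exists2 x, x \in M & connect (del_rel C) v x.
  move=> CM vC hC; have [m mM c] := connect_monitor_of_cut_size (subxx M) CM vM vC
    (leq_ltn_trans hC hs).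
  exists m => //; apply: connect_sub c => x y /and5P[exy _ xC yC _].
  by apply: connect1; rewrite /del_rel exy xC yC.
have [x xM reach] := mon_del F FM vF (leqW hF).
split; first by exists x.
move=> c cv; case: (boolP (c \in F)) => cF.
  by exists x => //; exact: connect_del_rel_avoid.
case: (boolP (c \in M)) => cM.
  have [m /setD1P[mc mM] c0] := connect_monitor_of_cut_size (subD1set M c) FM vM vF
    (leq_ltn_trans hF (hm c cM)).
  exists m => //; apply: connect_sub c0 => a b /and5P[eab aM aF bF bM].
  apply: connect1; rewrite /avoid /del_rel eab aF bF /=; apply/andP; split.
    by apply: contraNneq aM => ->.
  by move: bM; rewrite !inE; case: (eqVneq b c) => [->|//]; rewrite cM.
have CM : c |: F \subset ~: M by rewrite subUset sub1set inE cM FM.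
have vC : v \notin c |: F by rewrite !inE negb_or vF andbT eq_sym.
have hC : #|c |: F| <= k.+1 by rewrite cardsU1; case: (_ \notin _) => /=; lia.
have [y yM c0] := mon_del (c |: F) CM vC hC.
exists y => //; apply: connect_sub c0 => a b /and3P[eab aC bC].
move: aC bC; rewrite !inE !negb_or => /andP[ac aF] /andP[bc bF].
by apply: connect1; rewrite /avoid /del_rel eab aF bF ac bc.
Qed.

Lemma meas_path_of_fan v (F : {set T}) : v \notin M -> v \notin F ->
  fan (del_rel F) v M ->
  exists p, [/\ is_meas_path e M p, v \in p & ~~ has (fun x => x \in F) p].
Proof.
move=> vM vF [A [B [pA pB U lA lB]]].
move: pA U lA; case/lastP: A => [|A a] pA U lA; first by rewrite /= lA in vM.
rewrite last_rcons in lA.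
have del_e : subrel (del_rel F) e by move=> x y /andP[].
have lBv : last v B != v by apply: contraNneq vM => <-.
have lBB : last v B \in B by have := mem_last v B; rewrite inE (negbTE lBv).
exists (a :: rcons (rev A) v ++ B); split.
- rewrite /is_meas_path cat_path (path_rev_rcons (sub_path del_e pA)) last_rcons.
  rewrite (sub_path del_e pB) lA last_cat last_rcons lB /=.
  apply/andP; split; first change (uniq (a :: rcons (rev A) v ++ B)).
    apply/uniq_countP => y; have := (uniq_countP _).1 U y.
    rewrite /= !count_cat -!cats1 /= !count_cat /= count_rev; count_lia.
  apply/negP => /eqP E; have := (uniq_countP _).1 U a; have := count_mem_gt0 lBB.
  rewrite -E /= !count_cat -!cats1 /= !count_cat /= eqxx; count_lia.
- by rewrite inE mem_cat mem_rcons inE eqxx !orbT.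
- have Hall : all (fun y => y \notin F) (v :: rcons A a ++ B).
    by rewrite /= all_cat vF (path_del_rel pA) (path_del_rel pB).
  apply/hasPn => y yp; apply: (allP Hall); move: yp.
  rewrite !(inE, mem_cat, mem_rcons, mem_rev).
  by move: (y == a) (y == v) (y \in A) (y \in B) => [] [] [] [].
Qed.

Lemma meas_robust_of_pi_v k v : v \notin M -> k.+1 <= pi_v e M v -> meas_robust k v.
Proof.
move=> vM hpi F FM hF vF.
have [reach HX] := reach_avoiding_of_pi_v vM hpi FM vF hF.
exact: meas_path_of_fan vM vF (fan_of_reach_avoiding vM reach HX).
Qed.

Lemma distinguishable_of_meas_robust k x (F1 F2 : {set T}) : meas_robust k x ->
  F2 \subset ~: M -> #|F2| <= k -> x \in F1 -> x \notin F2 -> distinguishable e M F1 F2.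
Proof.
move=> rob F2M hF2 xF1 xF2 E.
have [p [mp xp hn]] := rob F2 F2M hF2 xF2.
have := E p; rewrite !inE mp /= (negbTE hn).
by have -> : has (fun y => y \in F1) p by apply/hasP; exists x.
Qed.

Lemma k_identifiable_setU k (S I : {set T}) : k_identifiable e M k S ->
  {in I, forall x, meas_robust k x} -> k_identifiable e M k (S :|: I).
Proof.
move=> Sk rob F1 F2 F1M F2M h1 h2 hne.
have [x hx] : exists x, (x \in F1 :&: (S :|: I)) != (x \in F2 :&: (S :|: I)).
  apply/existsP; apply: contraNT hne => /existsPn H.
  by apply/eqP/setP => x; apply/eqP/negPn/H.
case: (boolP (x \in S)) => xS.
  apply: Sk => //; apply: contraNneq hx => /setP /(_ x).
  by rewrite !inE xS !andbT => ->.
move: hx; rewrite !in_setI !in_setU (negbTE xS) /=.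
case xI: (x \in I); last by rewrite !andbF.
case x1: (x \in F1); case x2: (x \in F2) => //= _.
  by apply: distinguishable_of_meas_robust (rob x xI) F2M h2 x1 _; rewrite x2.
move=> E; apply: (distinguishable_of_meas_robust (rob x xI) F1M h1 x2).
  by rewrite x1.
by move=> p; rewrite E.
Qed.

Lemma meas_robust_subset_max k (S I : {set T}) : max_k_identifiable e M k S ->
  I \subset ~: M -> {in I, forall x, meas_robust k x} -> I \subset S.
Proof.
case=> SM Sk Smax IM rob.
have hcard : #|S :|: I| <= #|S|.
  by apply: Smax; [rewrite subUset SM IM | exact: k_identifiable_setU].
have /eqP -> : S == S :|: I by rewrite eqEcard subsetUl hcard.
exact: subsetUr.
Qed.

Lemma path_first_monitor (A C : {set T}) x q : path e x q -> x \notin M -> x \notin C ->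
  last x q \in M -> all (fun y => y \notin C) q ->
  exists2 m, m \in q & (m \in M) && ((m \in A) ==> connect (aux_del A C) (Some x) None).
Proof.
elim: q x => [|y q IH] x /=; first by move=> _ xM _ xMl; rewrite xMl in xM.
move=> /andP[exy pq] xM xC lq /andP[yC allq].
have hx : Some x \in VH :\: Some @: C by rewrite in_setD mem_imset_Some Some_aux_V xC xM.
case: (boolP (y \in M)) => yM.
  exists y; first exact: mem_head.
  rewrite yM /=; apply/implyP => yA; apply: connect1.
  rewrite /aux_del hx in_setD None_imset_Some None_aux_V /= /nbrs inE xM andbT /=.
  by apply/exists_inP; exists y; rewrite // e_sym.
have [m mq /andP[mM /implyP h]] := IH y pq yM yC lq allq.
exists m; first by rewrite inE mq orbT.
rewrite mM /=; apply/implyP => mA; apply: connect_trans (connect1 _) (h mA).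
by rewrite /aux_del hx in_setD mem_imset_Some Some_aux_V yC yM /= xM yM exy.
Qed.

Lemma meas_path_arms p v : is_meas_path e M p -> v \in p -> v \notin M ->
  exists s1 s2, [/\ path e v s1, path e v s2, last v s1 \in M & last v s2 \in M] /\
    [/\ {subset s1 <= p}, {subset s2 <= p} & forall y, y \in s1 -> y \notin s2].
Proof.
case: p => [|x0 q] //= /and5P[pq uq x0M lM _] vp vM.
have vq : v \in q by move: vp; rewrite inE => /orP[/eqP E|//]; rewrite E x0M in vM.
move: pq uq lM; case/splitPr: vq => q1 q2 pq uq lM.
move: pq; rewrite cat_path /= => /and3P[pq1 elv pq2].
exists (rcons (rev q1) x0), q2; split; split => //.
- by apply: path_rev_rcons; rewrite rcons_path pq1.
- by rewrite last_rcons.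
- by rewrite last_cat in lM.
- by move=> y; rewrite -rev_cons mem_rev !inE mem_cat => /orP[->|->]; rewrite ?orbT.
- by move=> y yq2; rewrite !inE mem_cat inE yq2 !orbT.
- move=> y; rewrite -rev_cons mem_rev => y1; apply/negP => y2.
  have := (uniq_countP (x0 :: q1 ++ v :: q2)).1 uq y.
  have := count_mem_gt0 y1; have := count_mem_gt0 y2.
  rewrite /= !count_cat /=; count_lia.
Qed.

Lemma PF_setU1 (D : {set T}) v : v \notin D ->
  (forall p, is_meas_path e M p -> v \in p -> has (fun x => x \in D) p) ->
  PF e M (v |: D) =i PF e M D.
Proof.
move=> vD cover p; rewrite !inE; case mp: (is_meas_path e M p) => //=.
case: (boolP (v \in p)) => vp.
  by rewrite (cover p mp vp); apply/hasP; exists v; rewrite ?setU11.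
apply: eq_in_has => y yp; rewrite !inE; case: (eqVneq y v) => [E|//].
by rewrite -E yp in vp.
Qed.

Lemma not_k_identifiable_of_cover k (S D : {set T}) v : v \in S -> v \notin D ->
  v \notin M -> D \subset ~: M -> #|D| < k ->
  (forall p, is_meas_path e M p -> v \in p -> has (fun x => x \in D) p) ->
  ~ k_identifiable e M k S.
Proof.
move=> vS vD vM DM hD cover Sk; apply: (Sk (v |: D) D) => //.
- by rewrite subUset sub1set inE vM DM.
- by rewrite cardsU1 vD.
- exact: ltnW.
- by apply/eqP => /setP /(_ v); rewrite !inE eqxx vS (negbTE vD).
- exact: PF_setU1.
Qed.

(* The two arms of a measurement path through [v] are disjoint, so one of
   them misses [w]; it reaches a monitor, hence must cross [C :\ w]. *)
Lemma star_cut_cover v (C : {set T}) w : v \notin M -> v \notin C ->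
  ~~ connect (aux_del M C) (Some v) None ->
  forall p, is_meas_path e M p -> v \in p -> has (fun x => x \in C :\ w) p.
Proof.
move=> vM vC nc p mp vp; apply/negPn/negP => hn.
have [s1 [s2 [[p1 p2 l1 l2] [sub1 sub2 disj]]]] := meas_path_arms mp vp vM.
suff arm s : path e v s -> last v s \in M -> {subset s <= p} -> w \in s by
  exact: negP (disj w (arm s1 p1 l1 sub1)) (arm s2 p2 l2 sub2).
move=> ps ls sub; apply/negPn/negP => ws.
have notC : all (fun y => y \notin C) s.
  apply/allP => y ys; have : y \notin C :\ w by apply: (hasPn hn); exact: sub.
  by rewrite !inE negb_and negbK => /orP[/eqP E|//]; rewrite -E ys in ws.
have [m _ /andP[mM /implyP h]] := path_first_monitor M ps vM vC ls notC.
by rewrite (h mM) in nc.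
Qed.

Lemma monitor_cut_cover v (C : {set T}) m : v \notin M -> v \notin C ->
  ~~ connect (aux_del (M :\ m) C) (Some v) None ->
  forall p, is_meas_path e M p -> v \in p -> has (fun x => x \in C) p.
Proof.
move=> vM vC nc p mp vp; apply/negPn/negP => hn.
have [s1 [s2 [[p1 p2 l1 l2] [sub1 sub2 disj]]]] := meas_path_arms mp vp vM.
have notC s : {subset s <= p} -> all (fun y => y \notin C) s.
  by move=> sub; apply/allP => y /sub /(hasPn hn).
have [m1 m1s /andP[m1M h1]] := path_first_monitor (M :\ m) p1 vM vC l1 (notC _ sub1).
have [m2 m2s /andP[m2M h2]] := path_first_monitor (M :\ m) p2 vM vC l2 (notC _ sub2).
case: (eqVneq m1 m) => [m1m|m1m].
  have m2m : m2 != m by apply: contraNneq (disj m1 m1s) => E; rewrite m1m -E.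
  by move/implyP: h2; rewrite !inE m2m m2M => /(_ isT) c; rewrite c in nc.
by move/implyP: h1; rewrite !inE m1m m1M => /(_ isT) c; rewrite c in nc.
Qed.

Lemma cut_sizes_of_pi_v_lt k v : 0 < k -> pi_v e M v < k ->
  cut_size VH (aux_e e M M) (Some v) None <= k \/
  exists2 m, m \in M & cut_size VH (aux_e e M (M :\ m)) (Some v) None <= k.-1.
Proof.
move=> k0 hpi; have /bigmin_leq_wit[hd|[m mM hm]] : pi_v e M v <= k.-1 by lia.
  by left; lia.
by right; exists m.
Qed.

Lemma pi_v_ge_of_k_identifiable k (S : {set T}) v : v \notin M -> v \in S ->
  0 < k -> k < #|~: M| -> k_identifiable e M k S -> k <= pi_v e M v.
Proof.
move=> vM vS k0 kN Sk; rewrite leqNgt; apply/negP.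
case/(cut_sizes_of_pi_v_lt k0) => [hs|[m mM hm]].
  have [C [CM vC hC nc]] := small_cut_separator vM hs kN.
  have [w hw] : exists w, #|C :\ w| < k.
    case: (set_0Vmem C) => [->|[w wC]]; first by exists v; rewrite set0D cards0.
    by exists w; have := cardsD1 w C; rewrite wC; lia.
  apply: (not_k_identifiable_of_cover vS _ vM _ hw (star_cut_cover w vM vC nc)) Sk.
    by rewrite !inE (negbTE vC) andbF.
  exact: subset_trans (subsetDl C _) CM.
have [|C [CM vC hC nc]] := small_cut_separator vM hm; first by lia.
apply: (not_k_identifiable_of_cover vS vC vM CM _ (monitor_cut_cover vM vC nc)) Sk.
lia.
Qed.

End AuxGraph.

Theorem corollary5 (T : finType) (e : rel T) (M : {set T}) (k : nat) (S : {set T}) :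
  symmetric e -> irreflexive e -> (forall x y : T, connect e x y) ->
  1 <= k <= #|~: M| - 1 ->
  max_k_identifiable e M k S ->
  [set v in ~: M | k.+1 <= pi_v e M v] \subset S /\
  S \subset [set v in ~: M | k <= pi_v e M v].
Proof.
move=> e_sym _ _ /andP[k0 kN] Smax; have [SM Sk _] := Smax.
split.
  apply: (meas_robust_subset_max Smax).
    by apply/subsetP => v; rewrite inE => /andP[].
  move=> v; rewrite !inE => /andP[vM hpi].
  exact: (@meas_robust_of_pi_v _ _ _ e_sym k v vM hpi).
apply/subsetP => v vS; have := subsetP SM v vS; rewrite !inE => vM.
rewrite vM; apply: (pi_v_ge_of_k_identifiable e_sym vM vS k0 _ Sk); lia.
Qed.
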